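(* Let $\epsilon>0$, $\ell>0$, $\beta\ge 0$, and for $\delta\in(0,1)$ let $$\Lambda:=\begin{bmatrix}-\epsilon(1-\delta) & \frac{\epsilon}{2}(\ell(1-\delta)+\delta\beta)\\ \frac{\epsilon}{2}(\ell(1-\delta)+\delta\beta) & -\frac12\delta\end{bmatrix}.$$ If $\epsilon<\frac{1}{2\ell\beta}$, then $\Lambda\prec 0$ for some $\delta^\star\in(0,1)$.
   Context: In the paper, $\ell$ is a constant with $\|\widetilde H^T(\nabla\Phi(x,u)-\nabla\Phi(x',u))\|\le\ell\|x-x'\|$ and $\beta=\|PH\|$ for a positive definite Lyapunov matrix $P$; for the statement only $\ell>0$ and $\beta\ge0$ matter. $\Lambda\prec 0$ means negative definite. *)

From mathcomp Require Import all_boot all_order all_algebra.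
Set Implicit Arguments. Unset Strict Implicit. Unset Printing Implicit Defensive.
Import Order.TTheory GRing.Theory Num.Theory.
Local Open Scope ring_scope.

Definition neg_def (R : realFieldType) (n : nat) (A : 'M[R]_n) : Prop :=
  forall x : 'cV[R]_n, x != 0 -> (x^T *m A *m x) 0 0 < 0.

Definition Lambda (R : realFieldType) (eps l beta delta : R) : 'M[R]_2 :=
  let off := eps / 2%:R * (l * (1 - delta) + delta * beta) in
  \matrix_(i < 2, j < 2)
    if (i == 0) && (j == 0) then - (eps * (1 - delta))
    else if (i == 1) && (j == 1) then - (delta / 2%:R)
    else off.

(* A 2x2 real quadratic form with negative leading coefficient is negative
   definite as soon as its discriminant is negative, so it suffices to find
   delta in (0,1) with eps (l(1-delta) + delta beta)^2 < 2 (1-delta) delta.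
   The choice delta = eps l^2 / (1 + eps l (l - beta)) collapses
   l(1-delta) + delta beta to l / (1 + eps l (l - beta)), after which the
   condition reduces to 2 eps l beta < 1. *)

From mathcomp Require Import all_boot all_order all_algebra.
From mathcomp Require Import ring lra.
Import Order.TTheory GRing.Theory Num.Theory.
Local Open Scope ring_scope.

Lemma mx2_quadratic_form (R : comPzRingType) (A : 'M[R]_2) (x : 'cV[R]_2) :
  (x^T *m A *m x) 0 0 =
  A 0 0 * x 0 0 ^+ 2 + (A 0 1 + A 1 0) * (x 0 0 * x 1 0) + A 1 1 * x 1 0 ^+ 2.
Proof.
rewrite !mxE !big_ord_recr !big_ord0 /= !add0r !mxE !big_ord_recr !big_ord0.
rewrite /= !add0r !mxE.
have -> : widen_ord (leqnSn 1) ord_max = 0 :> 'I_2 by apply/val_inj.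
have -> : ord_max = 1 :> 'I_2 by apply/val_inj.
by ring.
Qed.

Lemma quadratic_form_lt0 (R : realFieldType) (a b c u v : R) :
  a < 0 -> b ^+ 2 < 4 * a * c -> (u != 0) || (v != 0) ->
  a * u ^+ 2 + b * (u * v) + c * v ^+ 2 < 0.
Proof.
move=> a_lt0 disc_lt0; have [-> | v_neq0 _] := eqVneq v 0.
  rewrite orbF => u_neq0.
  by rewrite mulr0 expr0n /= !mulr0 !addr0 nmulr_rlt0 // exprn_even_gt0.
have v2_gt0 : 0 < v ^+ 2 by rewrite exprn_even_gt0.
have complete_square : 4 * a * (a * u ^+ 2 + b * (u * v) + c * v ^+ 2)
  = (2 * a * u + b * v) ^+ 2 + (4 * a * c - b ^+ 2) * v ^+ 2 by ring.
have : 0 < 4 * a * (a * u ^+ 2 + b * (u * v) + c * v ^+ 2).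
  rewrite complete_square ltr_wpDl ?sqr_ge0 // mulr_gt0 // subr_gt0 //.
by rewrite -mulrA pmulr_rgt0 // nmulr_rgt0.
Qed.

Lemma mx2_neg_def (R : realFieldType) (A : 'M[R]_2) :
  A 0 0 < 0 -> (A 0 1 + A 1 0) ^+ 2 < 4 * A 0 0 * A 1 1 -> neg_def A.
Proof.
move=> A00_lt0 disc_lt0 x x_neq0; rewrite mx2_quadratic_form.
apply: quadratic_form_lt0 => //; apply: contraNT x_neq0; rewrite negb_or !negbK.
move=> /andP[/eqP x0 /eqP x1]; apply/eqP/matrixP => i j.
rewrite !ord1 mxE; case: i => [[|[|//]] i_lt2].
  by rewrite -x0; congr (x _ _); apply/val_inj.
by rewrite -x1; congr (x _ _); apply/val_inj.
Qed.

Lemma Lambda_neg_def (R : realFieldType) (eps l beta delta : R) :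
  0 < eps -> delta < 1 ->
  eps * (l * (1 - delta) + delta * beta) ^+ 2 < 2 * (1 - delta) * delta ->
  neg_def (Lambda eps l beta delta).
Proof.
move=> eps_gt0 delta_lt1 disc_lt0; apply: mx2_neg_def; rewrite !mxE /=.
  by rewrite oppr_lt0 mulr_gt0 // subr_gt0.
rewrite -(ltr_pM2l eps_gt0) in disc_lt0.
set s := l * _ + _ in disc_lt0 *.
have -> : (eps / 2%:R * s + eps / 2%:R * s) ^+ 2 = eps * (eps * s ^+ 2) by field.
have -> : 4 * - (eps * (1 - delta)) * - (delta / 2%:R)
  = eps * (2 * (1 - delta) * delta) by field.
exact: disc_lt0.
Qed.

Theorem lemma2 (R : realFieldType) (eps l beta : R) :
  0 < eps -> 0 < l -> 0 <= beta ->
  2%:R * l * beta * eps < 1 ->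
  exists delta : R, 0 < delta < 1 /\ neg_def (Lambda eps l beta delta).
Proof.
move=> eps_gt0 l_gt0 beta_ge0 small_eps.
have K_gt0 : 0 < eps * l ^+ 2 by rewrite mulr_gt0 // exprn_gt0.
pose D := 1 - eps * l * beta + eps * l ^+ 2.
have D_gt0 : 0 < D by rewrite /D; lra.
exists (eps * l ^+ 2 / D); split.
  by rewrite divr_gt0 //= ltr_pdivrMr // mul1r /D; lra.
apply: Lambda_neg_def => //; first by rewrite ltr_pdivrMr // mul1r /D; lra.
have -> : l * (1 - eps * l ^+ 2 / D) + eps * l ^+ 2 / D * beta = l / D.
  by rewrite /D; field; rewrite -/D lt0r_neq0.
have -> : 1 - eps * l ^+ 2 / D = (1 - eps * l * beta) / D.
  by rewrite /D; field; rewrite -/D lt0r_neq0.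
rewrite -(ltr_pM2r (exprn_gt0 2 D_gt0)).
have -> : eps * (l / D) ^+ 2 * D ^+ 2 = eps * l ^+ 2 by field; rewrite lt0r_neq0.
have -> : 2 * ((1 - eps * l * beta) / D) * (eps * l ^+ 2 / D) * D ^+ 2
  = 2 * (1 - eps * l * beta) * (eps * l ^+ 2) by field; rewrite lt0r_neq0.
nra.
Qed.
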